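(* Let $0<\alpha<1$, $\sigma>0$, $T>0$, $h=\sigma^2\alpha^2$, $\eta=\frac{4\pi^2\alpha}{\sigma^2\alpha^2}=\frac{4\pi^2}{\sigma^2\alpha}$, let $\gamma>0$, and for $x\in[e^{\frac1\alpha(\gamma-T)},1]$ let $a=2\alpha\pi(T+\alpha\log x)$ and $Q(x)=\frac{x^\alpha}{e^{2\pi a/h}-1}$. Then uniformly for $x\in[e^{\frac1\alpha(\gamma-T)},1]$: if $\eta\ge1$ (i.e. $h\le4\pi^2\alpha$), then $$\frac{1}{e^{\eta T}-1}\le Q(x)\le\frac{e^{\gamma}e^{-T}}{e^{\eta\gamma}-1};$$ if $\eta<1$ (i.e. $h>4\pi^2\alpha$), then $$\frac{(1-\eta)^{1-\frac1\eta}e^{-T}}{\eta}\le Q(x)\le\max\left\{\frac{1}{e^{\eta T}-1},\frac{e^\gamma e^{-T}}{e^{\eta\gamma}-1}\right\}.$$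
   Context: In the paper $\gamma=\alpha\log\!\Big(\frac{\frac1\kappa\sqrt{u^*}+1}{\sqrt{u^*}-1}\Big)+\sqrt{u^*}$ with $\kappa=\frac{\alpha}{1-\alpha}$ and $u^*=\frac{1+(1-2\alpha)\sqrt{4\alpha-4\alpha^2+1}}{2(1-\alpha)^2}$, and it is used with $\gamma<T$ so the interval is nonempty. *)

From Stdlib Require Import Reals.
Open Scope R_scope.

Definition hpar (sigma alpha : R) : R := sigma ^ 2 * alpha ^ 2.
Definition etapar (sigma alpha : R) : R := 4 * PI ^ 2 * alpha / (sigma ^ 2 * alpha ^ 2).
Definition apar (alpha T x : R) : R := 2 * alpha * PI * (T + alpha * ln x).
Definition Qfun (alpha sigma T x : R) : R :=
  Rpower x alpha / (exp (2 * PI * apar alpha T x / hpar sigma alpha) - 1).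

(** With [s = T + alpha ln x], which ranges over [[gamma, T]], one has
    [x^alpha = e^(s - T)] and [2 pi a / h = eta s], so
    [Q(x) = e^(-T) / phi(s)] where [phi(s) = e^(-s) (e^(eta s) - 1)].
    Since [phi'(s) = e^(-(1-eta) s) (e^(-eta s) - (1 - eta))], [phi] is
    increasing when [eta >= 1], and for [eta < 1] it increases up to
    [s0 = - ln (1 - eta) / eta] and decreases afterwards.  Bounding [phi(s)]
    between its values at the ends of [[gamma, T]] and its maximum
    [phi(s0) = eta (1 - eta)^(1/eta - 1)] gives the estimates. *)

From Stdlib Require Import Reals Lra.
From Coquelicot Require Import Coquelicot.
Open Scope R_scope.

Lemma nondecreasing_of_derive_nonneg (f df : R -> R) (a b : R) :
  a <= b ->
  (forall t, a <= t <= b -> is_derive f t (df t)) ->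
  (forall t, a <= t <= b -> 0 <= df t) ->
  f a <= f b.
Proof.
  intros Hab Hder Hpos.
  destruct (Req_dec a b) as [<- | Hne]; [lra |].
  destruct (MVT_cor2 f df a b) as [c [Hfc Hc]]; [lra | |].
  - intros c Hc. apply is_derive_Reals, Hder; exact Hc.
  - assert (0 <= df c) by (apply Hpos; lra). nra.
Qed.

Lemma nonincreasing_of_derive_nonpos (f df : R -> R) (a b : R) :
  a <= b ->
  (forall t, a <= t <= b -> is_derive f t (df t)) ->
  (forall t, a <= t <= b -> df t <= 0) ->
  f b <= f a.
Proof.
  intros Hab Hder Hneg.
  assert (H : - f a <= - f b).
  { apply (nondecreasing_of_derive_nonneg (fun t => - f t) (fun t => - df t));
      [exact Hab | |].
    - intros t Ht. exact (is_derive_opp f t (df t) (Hder t Ht)).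
    - intros t Ht. specialize (Hneg t Ht). lra. }
  lra.
Qed.

Lemma exp_le_exp (x y : R) : x <= y -> exp x <= exp y.
Proof. intros [Hlt | ->]; [left; apply exp_increasing, Hlt | right; reflexivity]. Qed.

Lemma Rdiv_le_contravar_r (c p q : R) : 0 <= c -> 0 < p -> p <= q -> c / q <= c / p.
Proof.
  intros Hc Hp Hpq. unfold Rdiv.
  apply Rmult_le_compat_l; [exact Hc | apply Rinv_le_contravar; assumption].
Qed.

Definition phi (e t : R) : R := exp (- (1 - e) * t) - exp (- t).

Definition phi_argmax (e : R) : R := - ln (1 - e) / e.

Lemma phiE (e t : R) : phi e t = exp (- t) * (exp (e * t) - 1).
Proof.
  unfold phi. replace (- (1 - e) * t) with (- t + e * t) by ring.
  rewrite exp_plus. ring.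
Qed.

Lemma phi_pos (e t : R) : 0 < e -> 0 < t -> 0 < phi e t.
Proof.
  intros He Ht. rewrite phiE. apply Rmult_lt_0_compat; [apply exp_pos |].
  assert (1 < exp (e * t)) by (rewrite <- exp_0; apply exp_increasing; nra).
  lra.
Qed.

Definition phi_deriv (e t : R) : R := exp (- (1 - e) * t) * (exp (- (e * t)) - (1 - e)).

Lemma is_derive_phi (e t : R) : is_derive (phi e) t (phi_deriv e t).
Proof.
  unfold phi, phi_deriv. auto_derive; [exact I |].
  rewrite Rmult_minus_distr_l, <- exp_plus.
  replace (- (1 - e) * t + - (e * t)) with (- t) by ring. ring.
Qed.

Lemma exp_phi_argmax (e : R) : 0 < e < 1 -> exp (- (e * phi_argmax e)) = 1 - e.
Proof.
  intros He. unfold phi_argmax.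
  replace (- (e * (- ln (1 - e) / e))) with (ln (1 - e)) by (field; lra).
  apply exp_ln. lra.
Qed.

Lemma phi_nondecreasing (e a b : R) : 1 <= e -> a <= b -> phi e a <= phi e b.
Proof.
  intros He Hab. apply (nondecreasing_of_derive_nonneg _ (phi_deriv e) a b Hab).
  - intros t _. apply is_derive_phi.
  - intros t _. unfold phi_deriv. pose proof (exp_pos (- (1 - e) * t)).
    pose proof (exp_pos (- (e * t))).
    apply Rmult_le_pos; lra.
Qed.

Lemma phi_nondecreasing_le_argmax (e a b : R) :
  0 < e < 1 -> a <= b <= phi_argmax e -> phi e a <= phi e b.
Proof.
  intros He Hab. apply (nondecreasing_of_derive_nonneg _ (phi_deriv e) a b); [lra | |].
  - intros t _. apply is_derive_phi.
  - intros t Ht. unfold phi_deriv. pose proof (exp_pos (- (1 - e) * t)).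
    assert (1 - e <= exp (- (e * t))).
    { rewrite <- (exp_phi_argmax e He). apply exp_le_exp. nra. }
    apply Rmult_le_pos; lra.
Qed.

Lemma phi_nonincreasing_ge_argmax (e a b : R) :
  0 < e < 1 -> phi_argmax e <= a <= b -> phi e b <= phi e a.
Proof.
  intros He Hab. apply (nonincreasing_of_derive_nonpos _ (phi_deriv e) a b); [lra | |].
  - intros t _. apply is_derive_phi.
  - intros t Ht. unfold phi_deriv. pose proof (exp_pos (- (1 - e) * t)).
    assert (exp (- (e * t)) <= 1 - e).
    { rewrite <- (exp_phi_argmax e He). apply exp_le_exp. nra. }
    nra.
Qed.

Lemma phi_le_argmax (e t : R) : 0 < e < 1 -> phi e t <= phi e (phi_argmax e).
Proof.
  intros He. destruct (Rle_dec t (phi_argmax e)).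
  - apply phi_nondecreasing_le_argmax; lra.
  - apply phi_nonincreasing_ge_argmax; lra.
Qed.

Lemma phi_ge_min (e a b t : R) :
  0 < e < 1 -> a <= t <= b -> Rmin (phi e a) (phi e b) <= phi e t.
Proof.
  intros He Ht. destruct (Rle_dec t (phi_argmax e)).
  - eapply Rle_trans; [apply Rmin_l |]. apply phi_nondecreasing_le_argmax; lra.
  - eapply Rle_trans; [apply Rmin_r |]. apply phi_nonincreasing_ge_argmax; lra.
Qed.

Lemma phi_argmax_value (e : R) :
  0 < e < 1 -> phi e (phi_argmax e) = e / Rpower (1 - e) (1 - 1 / e).
Proof.
  intros He.
  assert (Hexp : exp (e * phi_argmax e) = / (1 - e)).
  { rewrite <- (exp_phi_argmax e He), <- exp_Ropp. f_equal. ring. }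
  assert (Hroot : exp (- phi_argmax e) = Rpower (1 - e) (1 / e)).
  { unfold Rpower, phi_argmax. f_equal. field. lra. }
  rewrite phiE, Hexp, Hroot.
  replace (1 - 1 / e) with (1 + - (1 / e)) by ring.
  rewrite Rpower_plus, Rpower_Ropp, Rpower_1 by lra.
  pose proof (exp_pos (1 / e * ln (1 - e))).
  unfold Rpower. field. lra.
Qed.

Lemma exp_div_phi (e T s : R) :
  exp (s - T) / (exp (e * s) - 1) = exp (- T) / phi e s.
Proof.
  rewrite phiE. unfold Rdiv. rewrite Rinv_mult, (exp_Ropp s), Rinv_inv.
  replace (s - T) with (s + - T) by ring. rewrite exp_plus. ring.
Qed.

Lemma Qfun_phi (alpha sigma T x : R) :
  alpha <> 0 -> sigma <> 0 ->
  Qfun alpha sigma T x = exp (- T) / phi (etapar sigma alpha) (T + alpha * ln x).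
Proof.
  intros Ha Hs. rewrite <- exp_div_phi. unfold Qfun, Rpower. f_equal.
  - f_equal. ring.
  - unfold apar, hpar, etapar. f_equal. f_equal. field. auto.
Qed.

Lemma etapar_pos (sigma alpha : R) : 0 < alpha -> 0 < sigma -> 0 < etapar sigma alpha.
Proof.
  intros Ha Hs. pose proof PI_RGT_0. unfold etapar.
  apply Rdiv_lt_0_compat; [| apply Rmult_lt_0_compat; apply pow_lt; lra].
  apply Rmult_lt_0_compat; [| lra]. apply Rmult_lt_0_compat; [lra | apply pow_lt; lra].
Qed.

Lemma log_shift_range (alpha T gamma x : R) :
  0 < alpha -> exp ((gamma - T) / alpha) <= x <= 1 ->
  gamma <= T + alpha * ln x <= T.
Proof.
  intros Ha Hx. pose proof (exp_pos ((gamma - T) / alpha)).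
  assert (Hup : ln x <= ln 1) by (apply ln_le; lra).
  assert (Hlo : ln (exp ((gamma - T) / alpha)) <= ln x) by (apply ln_le; lra).
  rewrite ln_1 in Hup. rewrite ln_exp in Hlo.
  apply (Rmult_le_compat_l alpha) in Hlo; [| lra].
  replace (alpha * ((gamma - T) / alpha)) with (gamma - T) in Hlo by (field; lra).
  nra.
Qed.

Theorem lemma4p1 (alpha sigma T gamma : R) :
  0 < alpha < 1 -> 0 < sigma -> 0 < T -> 0 < gamma ->
  let eta := etapar sigma alpha in
  (1 <= eta ->
     forall x, exp ((gamma - T) / alpha) <= x <= 1 ->
       1 / (exp (eta * T) - 1) <= Qfun alpha sigma T x <=
       exp gamma * exp (- T) / (exp (eta * gamma) - 1)) /\
  (eta < 1 ->
     forall x, exp ((gamma - T) / alpha) <= x <= 1 ->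
       Rpower (1 - eta) (1 - 1 / eta) * exp (- T) / eta <= Qfun alpha sigma T x <=
       Rmax (1 / (exp (eta * T) - 1)) (exp gamma * exp (- T) / (exp (eta * gamma) - 1))).
Proof.
  intros Ha Hs HT Hg eta.
  assert (Heta : 0 < eta) by (apply etapar_pos; lra).
  assert (HeT : 0 <= exp (- T)) by (left; apply exp_pos).
  assert (HphiT : 0 < phi eta T) by (apply phi_pos; lra).
  assert (Hphig : 0 < phi eta gamma) by (apply phi_pos; lra).
  assert (HendT : 1 / (exp (eta * T) - 1) = exp (- T) / phi eta T).
  { rewrite <- exp_div_phi, Rminus_diag, exp_0. reflexivity. }
  assert (Hendg : exp gamma * exp (- T) / (exp (eta * gamma) - 1) = exp (- T) / phi eta gamma).
  { rewrite <- exp_div_phi, <- exp_plus. reflexivity. }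
  rewrite HendT, Hendg.
  split; intros Heta1 x Hx;
    pose proof (log_shift_range alpha T gamma x (proj1 Ha) Hx) as Hsx;
    rewrite Qfun_phi by lra; fold eta; set (s := T + alpha * ln x) in *;
    assert (Hphis : 0 < phi eta s) by (apply phi_pos; lra).
  - split; apply Rdiv_le_contravar_r; auto; apply phi_nondecreasing; lra.
  - split.
    + replace (Rpower (1 - eta) (1 - 1 / eta) * exp (- T) / eta)
        with (exp (- T) / phi eta (phi_argmax eta)).
      * apply Rdiv_le_contravar_r; auto. apply phi_le_argmax. lra.
      * rewrite phi_argmax_value by lra.
        pose proof (exp_pos ((1 - 1 / eta) * ln (1 - eta))).
        unfold Rpower. field. lra.
    + pose proof (phi_ge_min eta gamma T s (conj Heta Heta1) Hsx) as Hmin.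
      destruct (Rle_dec (phi eta gamma) (phi eta T)).
      * rewrite Rmin_left in Hmin by lra.
        eapply Rle_trans; [| apply Rmax_r]. apply Rdiv_le_contravar_r; auto.
      * rewrite Rmin_right in Hmin by lra.
        eapply Rle_trans; [| apply Rmax_l]. apply Rdiv_le_contravar_r; auto.
Qed.
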